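(* Let $H=\sum_{i=1}^N c_iP_i$ be a Pauli Hamiltonian, $|\psi\rangle$ a state, $\mathcal{G}=(G^{[1]},\dots,G^{[m]})$ a grouping of $H$ and $\mathcal{R}=(G'^{[1]},\dots,G'^{[m]})$ a repacking of $\mathcal{G}$. Assume that $\sigma_{P_iP_k}=0$ for all distinct commuting $P_i,P_k\in\mathrm{supp}(H)$. Fix positive integer shot counts $M_1,\dots,M_m$ such that both $G^{[j]}$ and $G'^{[j]}$ are measured $M_j$ times. Let $\overline{E}_{\mathcal{G}}$ and $\overline{E}_{\mathcal{R}}$ be the shot-weighted averaging energy estimators for $\mathcal{G}$ and $\mathcal{R}$. If there exist $j$ and $P_s\in G'^{[j]}\setminus G^{[j]}$ with $\sigma^2_{P_s}>0$, then $\mathrm{Var}(\overline{E}_{\mathcal{R}})<\mathrm{Var}(\overline{E}_{\mathcal{G}})$.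
   Context: A Pauli Hamiltonian is $H=\sum_{i=1}^N c_iP_i$ with real nonzero $c_i$ and distinct $n$-qubit Pauli strings $P_i$; $\mathrm{supp}(H)=\{P_1,\dots,P_N\}$. For a state $|\psi\rangle$, $\langle P\rangle=\langle\psi|P|\psi\rangle$, $\sigma_P^2=1-\langle P\rangle^2$, and for commuting $P,Q$, $\sigma_{PQ}=\langle PQ\rangle-\langle P\rangle\langle Q\rangle$. A grouping is a list $(G^{[1]},\dots,G^{[m]})$ of pairwise disjoint sets of mutually commuting operators from $\mathrm{supp}(H)$ whose union is $\mathrm{supp}(H)$; an overlapped grouping drops disjointness. A repacking of a grouping $(G^{[1]},\dots,G^{[m]})$ is an overlapped grouping $(G'^{[1]},\dots,G'^{[m]})$ with $G^{[j]}\subseteq G'^{[j]}$ for all $j$. Measurement model: group $j$ is measured in $M_j$ independent shots, each shot giving simultaneous $\pm1$ outcomes of all operators in the group (single-shot outcome of $P$ has mean $\langle P\rangle$, variance $\sigma_P^2$; two operators in the same group have single-shot covariance $\sigma_{PQ}$); different groups use independent shots. With $\Gamma(i)=\{j:P_i\in \text{group } j\}$ and $\overline{\langle P_i\rangle}_{(j)}$ the sample mean of $P_i$ over group $j$'s shots, the shot-weighted averaging estimator is $\overline{E}=\sum_ic_i\sum_{j\in\Gamma(i)}\frac{M_j}{\sum_{k\in\Gamma(i)}M_k}\overline{\langle P_i\rangle}_{(j)}$. *)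

From HB Require Import structures.
From mathcomp Require Import all_boot all_order all_algebra.
From mathcomp Require Import all_classical all_reals all_analysis.
From mathcomp Require Import complex.

Set Implicit Arguments.
Unset Strict Implicit.
Unset Printing Implicit Defensive.

Import Order.TTheory GRing.Theory Num.Theory.

Local Open Scope ring_scope.

(* An n-qubit Pauli string: a label in 'I_4 for each qubit, with the        *)
(* convention 0 = I, 1 = X, 2 = Y, 3 = Z.                                    *)
Definition pauli (n : nat) := {ffun 'I_n -> 'I_4}.

Section Quantum.
Variable R : realType.
Local Notation C := (R[i]).

(* Entry (x, y) of the single-qubit Pauli matrix with label a,              *)
(* with the computational basis |false> = |0>, |true> = |1>.                *)
Definition pauli1 (a : 'I_4) (x y : bool) : C :=
  match val a with
  | 0 => if x == y then 1 else 0
  | 1 => if x == y then 0 else 1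
  | 2 => if x == y then 0 else if x then 'i%C else - 'i%C
  | _ => if x == y then (if x then -1 else 1) else 0
  end.

(* q-th bit of the basis index a of (C^2)^{\otimes n}.                      *)
Definition qbit (q a : nat) : bool := odd (a %/ 2 ^ q).

(* The 2^n x 2^n matrix of a Pauli string (tensor product of the           *)
(* single-qubit Pauli matrices, written entrywise).                          *)
Definition pauli_mx (n : nat) (P : pauli n) : 'M[C]_(2 ^ n) :=
  \matrix_(a, b) \prod_(q < n) pauli1 (P q) (qbit q a) (qbit q b).

Definition pcommute (n : nat) (P Q : pauli n) : Prop :=
  pauli_mx P *m pauli_mx Q = pauli_mx Q *m pauli_mx P.

Definition dagger (k l : nat) (A : 'M[C]_(k, l)) : 'M[C]_(l, k) :=
  (map_mx (fun z : C => (z^*)%C) A)^T.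

Definition is_state (n : nat) (psi : 'cV[C]_(2 ^ n)) : Prop :=
  (dagger psi *m psi) ord0 ord0 = 1.

Definition qexpect (n : nat) (psi : 'cV[C]_(2 ^ n)) (A : 'M[C]_(2 ^ n)) : C :=
  (dagger psi *m A *m psi) ord0 ord0.

Definition pexp (n : nat) (psi : 'cV[C]_(2 ^ n)) (P : pauli n) : C :=
  qexpect psi (pauli_mx P).

Definition psigma2 (n : nat) (psi : 'cV[C]_(2 ^ n)) (P : pauli n) : C :=
  1 - pexp psi P ^+ 2.

(* sigma_{PQ} = <PQ> - <P><Q>  (for commuting P, Q) *)
Definition psigma (n : nat) (psi : 'cV[C]_(2 ^ n)) (P Q : pauli n) : C :=
  qexpect psi (pauli_mx P *m pauli_mx Q) - pexp psi P * pexp psi Q.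

End Quantum.

(* Groupings.  The Hamiltonian H = sum_i c_i P_i is given by P : 'I_N ->    *)
(* pauli n (injective: distinct strings) and c : 'I_N -> R (nonzero).       *)
(* A group is represented by the set of indices of its operators.           *)

Definition commuting_set (R : realType) (n N : nat) (P : 'I_N -> pauli n)
    (S : {set 'I_N}) : Prop :=
  forall i k, i \in S -> k \in S -> pcommute R (P i) (P k).

Definition is_overlapped_grouping (R : realType) (n N m : nat)
    (P : 'I_N -> pauli n) (G : 'I_m -> {set 'I_N}) : Prop :=
  (forall j, commuting_set R P (G j)) /\ (forall i, exists j, i \in G j).

Definition is_grouping (R : realType) (n N m : nat)
    (P : 'I_N -> pauli n) (G : 'I_m -> {set 'I_N}) : Prop :=
  is_overlapped_grouping R P G /\
  (forall j j', j != j' -> [disjoint G j & G j']).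

Definition is_repacking (R : realType) (n N m : nat) (P : 'I_N -> pauli n)
    (G G' : 'I_m -> {set 'I_N}) : Prop :=
  is_overlapped_grouping R P G' /\ (forall j, G j \subset G' j).

(* Measurement model.  X j t i is the (+-1) outcome of operator P_i in shot *)
(* t < M j of group j (meaningful only when i \in G j).                     *)

Section Model.
Local Open Scope classical_set_scope.
Variables (R : realType) (n N m : nat).
Variables (d : measure_display) (T : measurableType d) (Pr : probability T R).

Definition shot_event (G : 'I_m -> {set 'I_N})
    (X : 'I_m -> nat -> 'I_N -> {RV Pr >-> R}) (k : 'I_m * nat)
    (B : 'I_N -> set R) : set T :=
  [set w | forall i, i \in G k.1 -> B i (X k.1 k.2 i w)].

(* Mutual independence of the shots (each shot being the random vector of   *)
(* the outcomes of all operators of its group): for any finitely many       *)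
(* distinct shots and any Borel sets, the joint probability factorizes.     *)
Definition shots_independent (G : 'I_m -> {set 'I_N}) (M : 'I_m -> nat)
    (X : 'I_m -> nat -> 'I_N -> {RV Pr >-> R}) : Prop :=
  forall (s : seq ('I_m * nat)) (B : 'I_m * nat -> 'I_N -> set R),
    uniq s -> (forall k, k \in s -> (k.2 < M k.1)%N) ->
    (forall k i, measurable (B k i)) ->
    Pr (\big[setI/setT]_(k <- s) shot_event G X k (B k)) =
    (\prod_(k <- s) Pr (shot_event G X k (B k)))%E.

Definition measurement_model (psi : 'cV[R[i]]_(2 ^ n)) (P : 'I_N -> pauli n)
    (G : 'I_m -> {set 'I_N}) (M : 'I_m -> nat)
    (X : 'I_m -> nat -> 'I_N -> {RV Pr >-> R}) : Prop :=
  [/\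
      (forall j t i, (t < M j)%N -> i \in G j ->
         forall w, X j t i w = 1 \/ X j t i w = -1),
      (forall j t i, (t < M j)%N -> i \in G j ->
         ('E_Pr[X j t i] = (complex.Re (pexp psi (P i)))%:E)%E),
      (forall j t i, (t < M j)%N -> i \in G j ->
         ('V_Pr[X j t i] = (complex.Re (psigma2 psi (P i)))%:E)%E),
      (forall j t i k, (t < M j)%N -> i \in G j -> k \in G j -> i != k ->
         covariance Pr (X j t i) (X j t k) =
         (complex.Re (psigma psi (P i) (P k)))%:E) &
      shots_independent G M X].

Definition Gamma (G : 'I_m -> {set 'I_N}) (i : 'I_N) : {set 'I_m} :=
  [set j | i \in G j].

Definition sample_mean (M : 'I_m -> nat)
    (X : 'I_m -> nat -> 'I_N -> {RV Pr >-> R}) (j : 'I_m) (i : 'I_N) : T -> R :=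
  fun w => (M j)%:R^-1 * \sum_(t < M j) X j t i w.

Definition estimator (c : 'I_N -> R) (G : 'I_m -> {set 'I_N})
    (M : 'I_m -> nat) (X : 'I_m -> nat -> 'I_N -> {RV Pr >-> R}) : T -> R :=
  fun w => \sum_(i < N) c i *
    \sum_(j in Gamma G i)
      ((M j)%:R / \sum_(k in Gamma G i) (M k)%:R) * sample_mean M X j i w.

End Model.

From HB Require Import structures.
From mathcomp Require Import all_boot all_order all_algebra.
From mathcomp Require Import all_classical all_reals all_analysis.
From mathcomp Require Import complex.
From mathcomp Require Import lra ring.

Set Implicit Arguments.
Unset Strict Implicit.
Unset Printing Implicit Defensive.

Import Order.TTheory GRing.Theory Num.Theory.
Local Open Scope classical_set_scope.
Local Open Scope ring_scope.

(** Every single-shot outcome entering the estimator is a +-1 variable, and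
    any two of them are uncorrelated: outcomes of distinct operators in the same
    shot have covariance [sigma_{P_i P_k} = 0] by hypothesis, and outcomes of
    different shots are independent.  Writing the estimator as a weighted sum of
    all outcomes, its variance is therefore
    [sum_i c_i^2 sigma_{P_i}^2 / S_i], where [S_i = sum_(j in Gamma(i)) M_j]
    counts the shots measuring [P_i].  Repacking only enlarges each [Gamma(i)],
    and strictly enlarges [Gamma(s)], so every term weakly decreases and the
    [s]-th one, which is positive, strictly decreases. *)

Section covariance_of_sums.
Local Open Scope ereal_scope.
Context d (T : measurableType d) (R : realType) (P : probability T R).

Lemma Lfun2_sum (I : eqType) (F : I -> T -> R) (s : seq I) :
  {in s, forall k, F k \in Lfun P 2%:E} -> (\sum_(k <- s) F k)%R \in Lfun P 2%:E.
Proof.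
move=> Fs; rewrite big_seq; apply: rpred_sum => [|k ks]; [exact: lee1n | exact: Fs].
Qed.

Lemma covarianceZZ a b (X Y : T -> R) : X \in Lfun P 2%:E -> Y \in Lfun P 2%:E ->
  covariance P (a \o* X)%R (b \o* Y)%R = (a * b)%:E * covariance P X Y.
Proof.
move=> X2 Y2.
have Pfin : P setT \is a fin_num := fin_num_measure P _ measurableT.
have bY2 : (b \o* Y)%R \in Lfun P 2%:E by rewrite Lfun_scale // ler1n.
have L1 := Lfun_subset12 Pfin.
rewrite covarianceZl ?(L1 _ X2) ?(L1 _ bY2) ?(Lfun2_mul_Lfun1 X2 bY2) //.
by rewrite covarianceZr ?(L1 _ X2) ?(L1 _ Y2) ?(Lfun2_mul_Lfun1 X2 Y2) // muleA EFinM.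
Qed.

Lemma covariance_sumr (I : eqType) (X : T -> R) (F : I -> T -> R) (s : seq I) :
  X \in Lfun P 2%:E -> {in s, forall k, F k \in Lfun P 2%:E} ->
  covariance P X (\sum_(k <- s) F k)%R = \sum_(k <- s) covariance P X (F k).
Proof.
move=> X2; elim: s => [|a s IH] Fs; first by rewrite !big_nil covariance_cst_r.
have Fs' : {in s, forall k, F k \in Lfun P 2%:E}.
  by move=> k ks; apply: Fs; rewrite inE ks orbT.
rewrite !big_cons covarianceDr ?IH ?Lfun2_sum //.
by apply: Fs; rewrite mem_head.
Qed.

Lemma variance_sum_uncorrelated (I : eqType) (F : I -> T -> R) (s : seq I) :
  uniq s -> {in s, forall k, F k \in Lfun P 2%:E} ->
  {in s &, forall k l, k != l -> covariance P (F k) (F l) = 0} ->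
  'V_P[(\sum_(k <- s) F k)%R] = \sum_(k <- s) 'V_P[F k].
Proof.
elim: s => [|a s IH] /=; first by rewrite !big_nil variance_cst.
move=> /andP[a_notin_s s_uniq] Fs Fcov.
have Fa : F a \in Lfun P 2%:E by apply: Fs; rewrite mem_head.
have Fs' : {in s, forall k, F k \in Lfun P 2%:E}.
  by move=> k ks; apply: Fs; rewrite inE ks orbT.
have Fcov' : {in s &, forall k l, k != l -> covariance P (F k) (F l) = 0}.
  by move=> k l ks ls; apply: Fcov; rewrite inE ?ks ?ls orbT.
have cross0 : covariance P (F a) (\sum_(k <- s) F k)%R = 0.
  rewrite covariance_sumr // big1_seq // => k /andP[_ ks].
  apply: Fcov; rewrite ?mem_head ?inE ?ks ?orbT //.
  by apply: contraNneq a_notin_s => ->.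
by rewrite !big_cons varianceD ?Lfun2_sum // IH // cross0 mule0 adde0.
Qed.

End covariance_of_sums.

Section sign_variables.
Local Open Scope ereal_scope.
Context d (T : measurableType d) (R : realType) (P : probability T R).

Lemma Lfun_sign (X : {RV P >-> R}) (r : R) : (forall w, X w = 1 \/ X w = -1)%R ->
  (X : T -> R) \in Lfun P r%:E.
Proof.
move=> Xpm; have := Lfun_cst P 1%R r.
rewrite !inE /= => /andP[_ cst1]; apply/andP; split.
  by rewrite inE; exact: measurable_funPT.
move: cst1; rewrite !inE /finite_norm unlock /=.
suff -> : (fun x => (`|X x| `^ r)%:E) = (fun _ => (`|1%R| `^ r)%:E) by [].
by apply/funext => x; case: (Xpm x) => ->; rewrite ?normrN.
Qed.

Lemma sign_indicE (X : T -> R) : (forall w, X w = 1 \/ X w = -1)%R ->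
  X = (2 \o* \1_(X @^-1` [set 1]) \- cst 1)%R.
Proof.
move=> Xpm; apply/funext => w /=; rewrite indicE.
case: (Xpm w) => Xw; first by rewrite mem_set /preimage /= Xw //; lra.
rewrite memNset ?mul0r ?sub0r // /preimage /= Xw => /eqP; lra.
Qed.

Lemma Lfun_indic_sign (X : {RV P >-> R}) : (forall w, X w = 1 \/ X w = -1)%R ->
  (\1_(X @^-1` [set 1%R]) : T -> R) \in Lfun P 2%:E.
Proof.
move=> Xpm.
have -> : (\1_(X @^-1` [set 1%R]) : T -> R) = (2^-1 \o* (X \+ cst 1))%R.
  by rewrite [X in (X \+ _)%R](sign_indicE Xpm); apply/funext => w /=; field.
rewrite Lfun_scale ?ler1n // rpredD //; first exact: lee1n.
  by move=> ?; exact: Lfun_sign.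
by move=> ?; exact: Lfun_cst.
Qed.

(* Writing a sign variable as [2 * 1_{X = 1} - 1] reduces its covariance to
   that of two indicators. *)
Lemma covariance_sign_indep (X Y : {RV P >-> R}) :
  (forall w, X w = 1 \/ X w = -1)%R -> (forall w, Y w = 1 \/ Y w = -1)%R ->
  P (X @^-1` [set 1%R] `&` Y @^-1` [set 1%R]) =
    P (X @^-1` [set 1%R]) * P (Y @^-1` [set 1%R]) ->
  covariance P X Y = 0.
Proof.
move=> Xpm Ypm.
set A := X @^-1` _; set B := Y @^-1` _ => indep.
have mA : measurable A by exact: measurable_funPTI.
have mB : measurable B by exact: measurable_funPTI.
have A2 : (\1_A : T -> R) \in Lfun P 2%:E := Lfun_indic_sign Xpm.
have B2 : (\1_B : T -> R) \in Lfun P 2%:E := Lfun_indic_sign Ypm.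
have Pfin : P setT \is a fin_num := fin_num_measure P _ measurableT.
have L2 (r : R) (Z : T -> R) : Z \in Lfun P 2%:E -> (r \o* Z)%R \in Lfun P 2%:E.
  by move=> Z2; rewrite Lfun_scale ?ler1n.
rewrite {1}(sign_indicE Xpm) -/A covarianceBl ?L2 ?Lfun_cst ?Lfun_sign //.
rewrite covariance_cst_l sube0 (sign_indicE Ypm) -/B.
rewrite covarianceBr ?L2 ?Lfun_cst // covariance_cst_r sube0 covarianceZZ //.
have L1 := Lfun_subset12 Pfin.
rewrite covarianceE ?(L1 _ A2) ?(L1 _ B2) ?(Lfun2_mul_Lfun1 A2 B2) //.
have -> : (\1_A * \1_B : T -> R)%R = \1_(A `&` B) by rewrite indicI.
rewrite !expectation_indic //; last exact: measurableI.
rewrite indep subee ?mule0 //.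
by rewrite fin_numM // fin_num_measure.
Qed.

End sign_variables.

Lemma allpairs_pair_uniq (A B : eqType) (s : seq A) (t : A -> seq B) :
  uniq s -> {in s, forall x, uniq (t x)} -> uniq [seq (x, y) | x <- s, y <- t x].
Proof.
by move=> s_uniq t_uniq; apply: allpairs_uniq_dep => // -[x y] [x' y'] _ _ [/= -> ->].
Qed.

Section outcome_indexing.
Variables (N m : nat) (G : 'I_m -> {set 'I_N}) (M : 'I_m -> nat).

(* The outcome of operator [i] in shot [t] of group [j] is indexed by [(i, (j, t))]. *)
Definition measured_outcomes : seq ('I_N * ('I_m * nat)) :=
  [seq (i, jt) | i <- enum 'I_N,
     jt <- [seq (j, t) | j <- enum (Gamma G i), t <- iota 0 (M j)]].

Definition total_shots (i : 'I_N) : nat := \sum_(j in Gamma G i) M j.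

Lemma measured_outcomes_uniq : uniq measured_outcomes.
Proof.
apply: allpairs_pair_uniq => [|i _]; first exact: enum_uniq.
by apply: allpairs_pair_uniq => [|j _]; [exact: enum_uniq | exact: iota_uniq].
Qed.

Lemma mem_measured_outcomes i j t :
  ((i, (j, t)) \in measured_outcomes) = (i \in G j) && (t < M j)%N.
Proof.
apply/allpairsPdep/andP => [[i' [jt [_ /allpairsPdep[j' [t' []]]]]]|[iG tM]].
  by rewrite mem_enum inE mem_iota add0n => ? ? -> [-> -> ->].
exists i, (j, t); split; rewrite ?mem_enum //.
by apply/allpairsPdep; exists j, t; rewrite mem_enum inE mem_iota add0n.
Qed.

Lemma big_measured_outcomes (V : nmodType) (F : 'I_N * ('I_m * nat) -> V) :
  \sum_(k <- measured_outcomes) F k =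
  \sum_(i < N) \sum_(j in Gamma G i) \sum_(t < M j) F (i, (j, val t)).
Proof.
rewrite big_allpairs_dep /= -big_enum /=; apply: eq_bigr => i _.
rewrite big_allpairs_dep -big_enum /=; apply: eq_bigr => j _.
by rewrite -(big_mkord xpredT (fun t => F (i, (j, t)))) /index_iota subn0.
Qed.

Lemma total_shots_gt0 i j : (forall j, 0 < M j)%N -> i \in G j -> (0 < total_shots i)%N.
Proof.
by move=> M_gt0 iG; rewrite /total_shots (bigD1 j) ?inE //= ltn_addr.
Qed.

End outcome_indexing.

Lemma total_shots_repacking (N m : nat) (G G' : 'I_m -> {set 'I_N})
    (M : 'I_m -> nat) i :
  (forall j, G j \subset G' j) ->
  total_shots G' M i = (total_shots G M i + \sum_(j in Gamma G' i :\: Gamma G i) M j)%N.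
Proof.
move=> G_sub; rewrite /total_shots (big_setID (Gamma G i)); congr (_ + _)%N.
have /finset.setIidPr -> // : Gamma G i \subset Gamma G' i.
by apply/fintype.subsetP => j; rewrite !inE; exact: (fintype.subsetP (G_sub j)).
Qed.

Lemma ltr_sum_div_denoms (R : realFieldType) (I : finType) (a S S' : I -> R) (s : I) :
  (forall i, 0 <= a i) -> (forall i, 0 < S i <= S' i) -> 0 < a s -> S s < S' s ->
  \sum_i a i / S' i < \sum_i a i / S i.
Proof.
move=> a_ge0 S_le as_gt0 Ss_lt.
rewrite [ltLHS](bigD1 s) // [ltRHS](bigD1 s) //=; apply: ltr_leD.
  have /andP[Ss_gt0 _] := S_le s.
  by rewrite ltr_pM2l // ltf_pV2 ?posrE // (lt_trans Ss_gt0).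
apply: ler_sum => i _; have /andP[Si_gt0 SiS] := S_le i.
by rewrite ler_wpM2l // lef_pV2 ?posrE // (lt_le_trans Si_gt0).
Qed.

Section shot_weighted_estimator.
Variables (R : realType) (n N m : nat) (P : 'I_N -> pauli n) (psi : 'cV[R[i]]_(2 ^ n)).
Variables (G : 'I_m -> {set 'I_N}) (M : 'I_m -> nat).
Variables (d : measure_display) (T : measurableType d) (Pr : probability T R).
Variable X : 'I_m -> nat -> 'I_N -> {RV Pr >-> R}.
Hypothesis G_grouping : is_overlapped_grouping R P G.
Hypothesis psigma_commuting0 :
  forall i k, i != k -> pcommute R (P i) (P k) -> psigma psi (P i) (P k) = 0.
Hypothesis M_gt0 : forall j, (0 < M j)%N.
Hypothesis X_model : measurement_model psi P G M X.

Lemma shot_event_single j t i : i \in G j ->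
  shot_event G X (j, t) (fun k => if k == i then [set 1%R] else [set: R]) =
  X j t i @^-1` [set 1%R].
Proof.
move=> iG; apply/seteqP; split => w /=; first by move=> /(_ i iG); rewrite eqxx.
by move=> Xw k _; case: eqP => [->|].
Qed.

Lemma outcome_Lfun2 j t i : (t < M j)%N -> i \in G j ->
  (X j t i : T -> R) \in Lfun Pr 2%:E.
Proof.
have [X_pm _ _ _ _] := X_model.
by move=> tM iG; apply: Lfun_sign => w; apply: X_pm.
Qed.

(* Outcomes within one shot are uncorrelated by hypothesis, outcomes of
   different shots by independence. *)
Lemma outcomes_uncorrelated j t i j' t' i' :
  (t < M j)%N -> (t' < M j')%N -> i \in G j -> i' \in G j' ->
  (j, t, i) != (j', t', i') ->
  covariance Pr (X j t i) (X j' t' i') = 0%E.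
Proof.
have [X_pm _ _ X_cov X_indep] := X_model.
move=> tM t'M iG i'G neq; have [[ej et]|shot_neq] := eqVneq (j, t) (j', t').
  subst j' t'; have ii' : i != i' by apply: contraNneq neq => ->.
  by rewrite X_cov // psigma_commuting0 //; exact: (G_grouping.1 j).
apply: covariance_sign_indep => [w|w|]; [exact: X_pm | exact: X_pm |].
pose single (i0 : 'I_N) k := if k == i0 then [set 1%R] else [set: R].
pose B k := if k == (j, t) then single i else single i'.
have [Bjt Bjt'] : B (j, t) = single i /\ B (j', t') = single i'.
  by rewrite /B eqxx eq_sym (negbTE shot_neq).
have := X_indep [:: (j, t); (j', t')] B.
rewrite !big_cons !big_nil setIT mule1 Bjt Bjt' !shot_event_single //; apply.
- by rewrite /= inE shot_neq.
- by move=> k; rewrite !inE => /orP[] /eqP ->.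
- by move=> k k'; rewrite /B /single; do 2 case: ifP => _ //; exact: measurable_set1.
Qed.

Lemma estimatorE c : estimator c G M X =
  (\sum_(k <- measured_outcomes G M)
     (c k.1 / (total_shots G M k.1)%:R) \o* X k.2.1 k.2.2 k.1)%R.
Proof.
apply/funext => w; rewrite /estimator fct_sumE big_measured_outcomes.
apply: eq_bigr => i _; rewrite mulr_sumr; apply: eq_bigr => j ji.
rewrite /sample_mean /total_shots -natr_sum /= -mulr_suml.
have Mj_neq0 : (M j)%:R != 0 :> R by rewrite pnatr_eq0 -lt0n.
have iG : i \in G j by rewrite inE in ji.
have S_neq0 : (total_shots G M i)%:R != 0 :> R.
  by rewrite pnatr_eq0 -lt0n (total_shots_gt0 M_gt0 iG).
rewrite /total_shots in S_neq0; field.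
by rewrite Mj_neq0 S_neq0.
Qed.

Lemma variance_estimator c :
  'V_Pr[estimator c G M X] =
  (\sum_(i < N) c i ^+ 2 * complex.Re (psigma2 psi (P i)) / (total_shots G M i)%:R)%:E.
Proof.
have [_ _ X_var _ _] := X_model.
pose S i := (total_shots G M i)%:R : R.
pose F (k : 'I_N * ('I_m * nat)) := ((c k.1 / S k.1) \o* X k.2.1 k.2.2 k.1)%R.
have outcomeP k : k \in measured_outcomes G M -> (k.2.2 < M k.2.1)%N /\ k.1 \in G k.2.1.
  by case: k => i [j t]; rewrite mem_measured_outcomes => /andP[].
have F2 : {in measured_outcomes G M, forall k, F k \in Lfun Pr 2%:E}.
  by move=> k /outcomeP[tM iG]; rewrite Lfun_scale ?ler1n ?outcome_Lfun2.
rewrite estimatorE -/S -/F variance_sum_uncorrelated //; first last.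
- move=> [i [j t]] [i' [j' t']] /outcomeP[/= tM iG] /outcomeP[/= t'M i'G] neq.
  rewrite covarianceZZ ?outcome_Lfun2 // outcomes_uncorrelated ?mule0 //.
  by apply: contra neq => /eqP[-> -> ->].
- exact: measured_outcomes_uniq.
pose sigma2 i := complex.Re (psigma2 psi (P i)).
rewrite (eq_big_seq (fun k => ((c k.1 / S k.1) ^+ 2 * sigma2 k.1)%:E)).
  rewrite sumEFin big_measured_outcomes; congr _%:E; apply: eq_bigr => i _.
  under eq_bigr do rewrite /= sumr_const card_ord -mulr_natr.
  rewrite -mulr_sumr -natr_sum -/(total_shots G M i) -/(S i).
  have [j iG] := G_grouping.2 i.
  have S_neq0 : S i != 0 by rewrite pnatr_eq0 -lt0n (total_shots_gt0 M_gt0 iG).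
  by field.
by move=> k /outcomeP[tM iG]; rewrite varianceZ ?outcome_Lfun2 // X_var.
Qed.

Lemma Re_psigma2_ge0 i : 0 <= complex.Re (psigma2 psi (P i)).
Proof.
have [_ _ X_var _ _] := X_model; have [j iG] := G_grouping.2 i.
by rewrite -lee_fin -(X_var j 0%N) //; exact: variance_ge0.
Qed.

End shot_weighted_estimator.

Theorem theorem2 (R : realType) (n N m : nat)
  (P : 'I_N -> pauli n) (c : 'I_N -> R) (psi : 'cV[R[i]]_(2 ^ n))
  (G G' : 'I_m -> {set 'I_N}) (M : 'I_m -> nat)
  (d1 : measure_display) (T1 : measurableType d1) (Pr1 : probability T1 R)
  (X1 : 'I_m -> nat -> 'I_N -> {RV Pr1 >-> R})
  (d2 : measure_display) (T2 : measurableType d2) (Pr2 : probability T2 R)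
  (X2 : 'I_m -> nat -> 'I_N -> {RV Pr2 >-> R}) :
  injective P ->
  (forall i, c i != 0) ->
  is_state psi ->
  is_grouping R P G ->
  is_repacking R P G G' ->
  (forall i k, i != k -> pcommute R (P i) (P k) ->
     psigma psi (P i) (P k) = 0) ->
  (forall j, (0 < M j)%N) ->
  measurement_model psi P G M X1 ->
  measurement_model psi P G' M X2 ->
  (exists j s, [/\ s \in G' j, s \notin G j & 0 < psigma2 psi (P s)]) ->
  ('V_Pr2[estimator c G' M X2] < 'V_Pr1[estimator c G M X1])%E.
Proof.
move=> _ c_neq0 _ [G_og _] [G'_og G_sub] psigma0 M_gt0 model model'.
move=> [j0 [s [sG' sG psigma2s_gt0]]].
rewrite (variance_estimator G'_og psigma0 M_gt0 model').
rewrite (variance_estimator G_og psigma0 M_gt0 model) lte_fin.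
apply: (@ltr_sum_div_denoms _ _ _ _ _ s) => [i|i||].
- by rewrite mulr_ge0 ?sqr_ge0 // (Re_psigma2_ge0 G_og M_gt0 model).
- have [j iG] := G_og.2 i.
  rewrite ltr0n (total_shots_gt0 M_gt0 iG) ler_nat.
  by rewrite (total_shots_repacking _ _ G_sub) leq_addr.
- rewrite mulr_gt0 ?exprn_even_gt0 ?c_neq0 ?orbT //.
  by move: psigma2s_gt0; rewrite ltcE => /andP[].
rewrite ltr_nat (total_shots_repacking _ _ G_sub) -[ltnLHS]addn0 ltn_add2l.
by rewrite (bigD1 j0) ?inE ?sG' ?sG //= ltn_addr.
Qed.
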